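(* Let $n\ge 2$ and let $\sigma_1\in G_n$ be the automorphism with $\sigma_1(y_1y_2)=-y_1y_2$ and $\sigma_1(y_jy_{j+1})=y_jy_{j+1}$ for $2\le j\le n-1$. Then $(\mathrm{EC}_n-1)(\sigma_1(\mathrm{EC}_n)-1)=(x_1-\mathrm{EC}_{n-1}(x_2,\dots,x_n))^2$.
   Context: Let $x_1,\dots,x_n$ be algebraically independent indeterminates over $\mathbb{Q}$; in an algebraic closure fix $y_j$ with $y_j^2=1-x_j^2$. For indices $i_1<\dots<i_m$, $\mathrm{EC}_m(x_{i_1},\dots,x_{i_m})=\sum_{S\subseteq\{i_1,\dots,i_m\},\ |S|\text{ even}}(-1)^{|S|/2}\prod_{j\in S}y_j\prod_{j\notin S}x_j$, and $\mathrm{EC}_n=\mathrm{EC}_n(x_1,\dots,x_n)$. $G_n$ is the Galois group of $\mathbb{Q}(x_1,\dots,x_n,\ y_iy_j:1\le i<j\le n)$ over $\mathbb{Q}(x_1,\dots,x_n)$. *)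

From HB Require Import structures.
From mathcomp Require Import all_boot all_order all_algebra all_fingroup all_field.
Set Implicit Arguments. Unset Strict Implicit. Unset Printing Implicit Defensive.
Import GRing.Theory.
Local Open Scope ring_scope.

(* The rational function field Q(x_0, ..., x_{n-1}), built as the iterated
   fraction field Q(x_0)(x_1)...(x_{n-1}). *)
Fixpoint QX (n : nat) : fieldType :=
  if n is m.+1 then ({fraction {poly QX m}} : fieldType) else (rat : fieldType).

(* The indeterminates: xv n i is x_i in QX n (i < n); junk 0 for i >= n. *)
Fixpoint xv (n : nat) : nat -> QX n :=
  match n return nat -> QX n with
  | 0 => fun _ => 0
  | m.+1 => fun i => if i == m then (FracField.tofrac ('X : {poly QX m}))
                     else (FracField.tofrac ((xv m i)%:P : {poly QX m}))
  end.

Definition EC (R : comNzRingType) (n : nat) (x y : nat -> R) (A : {set 'I_n}) : R :=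
  \sum_(S : {set 'I_n} | (S \subset A) && ~~ odd #|S|)
     (-1) ^+ (#|S| %/ 2) * (\prod_(j in S) y j) * (\prod_(j in A :\: S) x j).

(* The field K_n = F(y_i y_j : i < j < n) inside L, where F = 1%VS is the
   base field Q(x_0..x_{n-1}). *)
Definition Kfield (F : fieldType) (L : fieldExtType F) (n : nat) (y : nat -> L)
  : {subfield L} :=
  <<1%AS & ([seq y i * y j | i <- iota 0 n, j <- iota i.+1 (n - i.+1)])%R>>%AS.

From HB Require Import structures.
From mathcomp Require Import all_boot all_order all_algebra all_fingroup all_field.
From mathcomp Require Import ring.
Set Implicit Arguments.
Unset Strict Implicit.
Unset Printing Implicit Defensive.
Import GRing.Theory.
Local Open Scope ring_scope.

(* Read x_j = cos t_j and y_j = sin t_j formally.  Then EC over A is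
   cos (sum_{j in A} t_j), its odd companion ES is the sine, and the
   angle-addition formulas hold as polynomial identities.  Since sigma1 negates
   y_1 y_2 and fixes y_j y_(j+1) for j >= 2, it multiplies y_1 by -e and the
   other y_j by e for a common sign e; EC is even in y, so with T = t_2 + ... + t_n
   sigma1 turns EC_n = cos (t_1 + T) into cos (t_1 - T).  The product of the two
   factors is then (x_1 C - 1)^2 - y_1^2 S^2 with C = cos T, S = sin T, which the
   relations y_1^2 = 1 - x_1^2 and S^2 = 1 - C^2 reduce to (x_1 - C)^2. *)

Lemma set_ind (T : finType) (P : {set T} -> Prop) :
  P set0 -> (forall (k : T) (A : {set T}), k \notin A -> P A -> P (k |: A)) ->
  forall A, P A.
Proof.
move=> P0 PU1 A; have [N leAN] := ubnP #|A|.
elim: N A leAN => // N IH A; have [->|[k kA]] := set_0Vmem A => // ltAN.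
rewrite -(setD1K kA); apply: PU1; first by rewrite setD11.
by apply: IH; rewrite (cardsD1 k) kA in ltAN.
Qed.

Lemma big_subsetU1 (R : Type) (idx : R) (op : Monoid.com_law idx) (T : finType)
    (k : T) (A : {set T}) (F : {set T} -> R) : k \notin A ->
  \big[op/idx]_(S : {set T} | S \subset k |: A) F S =
  op (\big[op/idx]_(S : {set T} | S \subset A) F S)
     (\big[op/idx]_(S : {set T} | S \subset A) F (k |: S)).
Proof.
move=> kA; rewrite (bigID (fun S : {set T} => k \in S)) /= Monoid.mulmC; congr (op _ _).
  by apply: eq_bigl => S; rewrite -subsetD1 setU1K.
rewrite (reindex_onto (fun S : {set T} => k |: S) (fun S => S :\ k)) /=; last first.
  by move=> S /andP[_ kS]; apply: setD1K.
apply: eq_bigl => S; rewrite setU11 andbT; apply/andP/idP => [[sSkA /eqP <-]|sSA].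
  by rewrite subDset.
by rewrite setUS // setU1K // (contra (subsetP sSA k)).
Qed.

Section AngleAddition.
Variables (R : comNzRingType) (n : nat) (x y : nat -> R).
Implicit Types (A : {set 'I_n}) (w : nat -> R).

Definition ES A : R :=
  \sum_(S : {set 'I_n} | (S \subset A) && odd #|S|)
     (-1) ^+ (#|S| %/ 2) * (\prod_(j in S) y j) * (\prod_(j in A :\: S) x j).

Let wsum w A : R :=
  \sum_(S : {set 'I_n} | S \subset A)
     w #|S| * (\prod_(j in S) y j) * (\prod_(j in A :\: S) x j).

(* The real and imaginary parts of i ^+ m. *)
Let cosw m : R := if odd m then 0 else (-1) ^+ (m %/ 2).
Let sinw m : R := if odd m then (-1) ^+ (m %/ 2) else 0.

Let cosw_succ m : cosw m.+1 = - sinw m.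
Proof.
by rewrite /cosw /sinw !divn2 /= uphalf_half; case: odd; rewrite ?oppr0 // exprS mulN1r.
Qed.

Let sinw_succ m : sinw m.+1 = cosw m.
Proof. by rewrite /cosw /sinw !divn2 /= uphalf_half; case: odd. Qed.

Let EC_wsum A : EC x y A = wsum cosw A.
Proof.
by rewrite /EC big_mkcondr; apply: eq_bigr => S _; rewrite /cosw; case: odd; rewrite ?mul0r.
Qed.

Let ES_wsum A : ES A = wsum sinw A.
Proof.
by rewrite /ES big_mkcondr; apply: eq_bigr => S _; rewrite /sinw; case: odd; rewrite ?mul0r.
Qed.

Let wsum_setU1 w k A : k \notin A ->
  wsum w (k |: A) = x k * wsum w A + y k * wsum (fun m => w m.+1) A.
Proof.
move=> kA; rewrite /wsum big_subsetU1 // !mulr_sumr.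
congr (_ + _); apply: eq_bigr => S sSA; have kS : k \notin S := contra (subsetP sSA k) kA.
  have -> : (k |: A) :\: S = k |: (A :\: S).
    by apply/setP => j; rewrite !inE; case: eqP => // ->; rewrite (negbTE kS).
  by rewrite big_setU1 ?inE ?(negbTE kA) ?andbF //= mulrCA.
have -> : (k |: A) :\: (k |: S) = A :\: S.
  by apply/setP => j; rewrite !inE; case: eqP => // ->; rewrite (negbTE kA) andbF.
by rewrite cardsU1 kS big_setU1 //= mulrCA !mulrA.
Qed.

Let wsum_set0 w : wsum w set0 = w 0%N.
Proof.
rewrite /wsum (big_pred1 set0) => [|S]; last by rewrite /= subset0.
by rewrite cards0 setDv !big_set0 !mulr1.
Qed.

Lemma EC_setU1 k A : k \notin A -> EC x y (k |: A) = x k * EC x y A - y k * ES A.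
Proof.
move=> kA; rewrite !EC_wsum ES_wsum wsum_setU1 // -mulrN; congr (_ + _ * _).
by rewrite /wsum -sumrN; apply: eq_bigr => S _; rewrite cosw_succ !mulNr.
Qed.

Lemma ES_setU1 k A : k \notin A -> ES (k |: A) = x k * ES A + y k * EC x y A.
Proof.
move=> kA; rewrite !ES_wsum EC_wsum wsum_setU1 //; congr (_ + _ * _).
by apply: eq_bigr => S _; rewrite sinw_succ.
Qed.

Lemma EC_sqr_add_ES_sqr A : {in A, forall j : 'I_n, x j ^+ 2 + y j ^+ 2 = 1} ->
  EC x y A ^+ 2 + ES A ^+ 2 = 1.
Proof.
elim/set_ind: A => [_|k A kA IH unit_kA].
  by rewrite EC_wsum ES_wsum !wsum_set0 expr1n expr0n addr0.
rewrite EC_setU1 // ES_setU1 //.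
have -> : forall a b c s : R, (a * c - b * s) ^+ 2 + (a * s + b * c) ^+ 2 =
                              (a ^+ 2 + b ^+ 2) * (c ^+ 2 + s ^+ 2) by move=> *; ring.
by rewrite unit_kA ?setU11 // IH ?mul1r // => j jA; apply: unit_kA; rewrite setU1r.
Qed.
End AngleAddition.

Section ECCongruences.
Variables (R : comNzRingType) (n : nat).
Implicit Types (x y : nat -> R) (A : {set 'I_n}).

Lemma eq_EC_in x x' y y' A :
    {in A, forall j : 'I_n, x j = x' j} -> {in A, forall j : 'I_n, y j = y' j} ->
  EC x y A = EC x' y' A.
Proof.
move=> eq_x eq_y; apply: eq_bigr => S /andP[/subsetP sSA _]; congr (_ * _ * _).
  by apply: eq_bigr => j /sSA /eq_y.
by apply: eq_bigr => j /setDP[/eq_x].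
Qed.

Lemma eq_ES_in x x' y y' A :
    {in A, forall j : 'I_n, x j = x' j} -> {in A, forall j : 'I_n, y j = y' j} ->
  ES x y A = ES x' y' A.
Proof.
move=> eq_x eq_y; apply: eq_bigr => S /andP[/subsetP sSA _]; congr (_ * _ * _).
  by apply: eq_bigr => j /sSA /eq_y.
by apply: eq_bigr => j /setDP[/eq_x].
Qed.

Lemma EC_scale_sign (e : R) x y A : e ^+ 2 = 1 -> EC x (fun j => e * y j) A = EC x y A.
Proof.
move=> e2; apply: eq_bigr => S /andP[_ evenS]; rewrite prodrMl.
suff -> : e ^+ #|S| = 1 by rewrite mul1r.
by rewrite -(odd_double_half #|S|) (negbTE evenS) -mul2n exprM e2 expr1n.
Qed.

Lemma rmorph_EC (R' : comNzRingType) (f : {rmorphism R -> R'}) x y A :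
  f (EC x y A) = EC (f \o x) (f \o y) A.
Proof.
rewrite rmorph_sum; apply: eq_bigr => S _.
by rewrite !rmorphM rmorphXn rmorphN1 !rmorph_prod.
Qed.
End ECCongruences.

Lemma sign_flip_first (F : fieldType) (n : nat) (y s : nat -> F) : (1 < n)%N ->
    (forall j, (j < n)%N -> y j != 0) ->
    (forall j, (j < n)%N -> s j ^+ 2 = y j ^+ 2) ->
    s 0%N * s 1%N = - (y 0%N * y 1%N) ->
    (forall j, (1 <= j)%N -> (j <= n - 2)%N -> s j * s j.+1 = y j * y j.+1) ->
  exists2 e, e ^+ 2 = 1 &
    forall j, (j < n)%N -> s j = e * (if j == 0%N then - y j else y j).
Proof.
move=> n_gt1 y_neq0 s_sqr s_01 s_cons.
pose eps j := s j / y j.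
have s_eps j : (j < n)%N -> s j = eps j * y j by move=> /y_neq0 yj; rewrite divfK.
have eps_sqr j : (j < n)%N -> eps j ^+ 2 = 1.
  move=> jn; apply: (mulIf (expf_neq0 2 (y_neq0 j jn))).
  by rewrite mul1r -exprMn -s_eps ?s_sqr.
have y01_neq0 : y 0%N * y 1%N != 0 by rewrite mulf_neq0 ?y_neq0 ?(ltnW n_gt1).
have eps_01 : eps 0%N * eps 1%N = -1.
  apply: (mulIf y01_neq0); rewrite mulN1r -s_01 (s_eps 0%N) ?(ltnW n_gt1) //.
  by rewrite (s_eps 1%N) // mulrACA.
have eps_const j : (0 < j < n)%N -> eps j = eps 1%N.
  elim: j => [//|[//|j] IH] /andP[_ jn]; have jn' : (j.+1 < n)%N := ltnW jn.
  have eps_cons : eps j.+1 * eps j.+2 = 1.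
    apply: (mulIf (mulf_neq0 (y_neq0 _ jn') (y_neq0 _ jn))).
    rewrite mul1r -[in RHS]s_cons //; last by rewrite leq_subRL ?addn2 // ltnW.
    by rewrite (s_eps _ jn') (s_eps _ jn) mulrACA.
  by rewrite -IH ?jn' // -[eps j.+2]mul1r -(eps_sqr _ jn') expr2 -mulrA eps_cons mulr1.
exists (eps 1%N) => [|[_|j jn]]; first exact: eps_sqr.
  rewrite s_eps ?(ltnW n_gt1) // mulrN -mulNr; congr (_ * _).
  by rewrite -[eps 0%N]mulr1 -(eps_sqr 1%N) // expr2 mulrA eps_01 mulN1r.
by rewrite s_eps // eps_const.
Qed.

Lemma cosD_sub1_mul_cosB_sub1 (R : comNzRingType) (a b c s : R) :
  b ^+ 2 = 1 - a ^+ 2 -> c ^+ 2 + s ^+ 2 = 1 ->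
  (a * c - b * s - 1) * (a * c + b * s - 1) = (a - c) ^+ 2.
Proof.
move=> b2 cs2; have s2 : s ^+ 2 = 1 - c ^+ 2 by rewrite -cs2 addrC addKr.
have -> : (a * c - b * s - 1) * (a * c + b * s - 1) = (a * c - 1) ^+ 2 - b ^+ 2 * s ^+ 2.
  by ring.
by rewrite b2 s2; ring.
Qed.

Lemma xv_sqr_neq1 n j : (j < n)%N -> xv n j ^+ 2 != 1.
Proof.
elim: n j => [//|n IH] j /=; rewrite ltnS leq_eqVlt.
case: eqP => [_ _|_ /= jn]; rewrite -tofracXn -tofrac1 tofrac_eq.
  by apply/eqP => /(congr1 (fun p : {poly QX n} => size p)); rewrite size_polyXn size_poly1.
by rewrite -rmorphXn -polyC1 (inj_eq polyC_inj) IH.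
Qed.

Theorem mainTheorem8 (n : nat) (hn : (2 <= n)%N)
  (L : splittingFieldType (QX n)) (y : nat -> L)
  (hy : forall j, (j < n)%N -> y j ^+ 2 = 1 - ((xv n j)%:A) ^+ 2)
  (sigma1 : gal_of (Kfield n y))
  (hsig : (sigma1 \in 'Gal(Kfield n y / 1%AS))%g)
  (h12 : sigma1 (y 0%N * y 1%N) = - (y 0%N * y 1%N))
  (hj : forall j, (1 <= j)%N -> (j <= n - 2)%N ->
          sigma1 (y j * y j.+1) = y j * y j.+1) :
  let x := fun j => (xv n j)%:A : L in
  (EC x y [set: 'I_n] - 1) * (sigma1 (EC x y [set: 'I_n]) - 1)
  = (x 0%N - EC x y [set j : 'I_n | (0 < j)%N]) ^+ 2.
Proof.
move=> x; pose k0 : 'I_n := Ordinal (ltnW hn); set A := [set j : 'I_n | (0 < j)%N].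
have k0A : k0 \notin A by rewrite inE.
have setT_k0A : [set: 'I_n] = k0 |: A.
  by apply/setP => j; rewrite !inE -val_eqE /=; case: (nat_of_ord j).
(* Elements of [gal_of] are [QX n]-linear by construction. *)
have sigma_scalar a : sigma1 a%:A = a%:A by rewrite linearZ /= rmorph1.
have y_neq0 j : (j < n)%N -> y j != 0.
  move=> jn; rewrite -sqrf_eq0 hy // -!in_algE -rmorphXn -(rmorph1 (in_alg L)).
  by rewrite -rmorphB fmorph_eq0 subr_eq0 eq_sym xv_sqr_neq1.
have sigma_y_sqr j : (j < n)%N -> sigma1 (y j) ^+ 2 = y j ^+ 2.
  move=> jn; rewrite -rmorphXn hy // rmorphB rmorph1 rmorphXn.
  by congr (1 - _ ^+ 2); exact: sigma_scalar.
have [e e2 sigma_y] := sign_flip_first hn y_neq0 sigma_y_sqr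
  (etrans (esym (rmorphM _ _ _)) h12)
  (fun j j1 jn => etrans (esym (rmorphM _ _ _)) (hj j j1 jn)).
pose y_flip j := if j == 0%N then - y j else y j.
have sigma_EC (B : {set 'I_n}) : sigma1 (EC x y B) = EC x y_flip B.
  rewrite rmorph_EC -[in RHS](EC_scale_sign _ _ _ e2).
  by apply: eq_EC_in => j _ /=; [exact: sigma_scalar | exact: sigma_y].
have y_flip_A : {in A, forall j : 'I_n, y_flip j = y j}.
  by move=> j; rewrite inE /y_flip => /lt0n_neq0/negbTE ->.
rewrite sigma_EC setT_k0A !EC_setU1 // (eq_EC_in (fun j _ => erefl) y_flip_A).
rewrite (eq_ES_in (fun j _ => erefl) y_flip_A) /y_flip /= mulNr opprK.
apply: cosD_sub1_mul_cosB_sub1; first exact: hy (ltnW hn).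
by apply: EC_sqr_add_ES_sqr => j _; rewrite hy // addrC subrK.
Qed.
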